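(* Let $N \in \mathbb{N}$, $\beta>0$ and $h\in\mathbb{R}$. Let $(g_{ij})_{1\le i<j\le N}$ be independent centered Gaussian random variables with variance $1/N$, extended to a symmetric matrix by $g_{ji}=g_{ij}$ and $g_{ii}=0$. Define the quenched finite-volume free energy \[ N f_N(\beta,h) = \log E_o\left[\exp\left(\beta H_N(\sigma) + h\sum_{i=1}^N \sigma_i\right)\right], \qquad H_N(\sigma)=\sum_{1\le i<j\le N} g_{ij}\sigma_i\sigma_j = \frac12\sum_{i,j=1}^N g_{ij}\sigma_i\sigma_j, \] where $E_o$ denotes expectation with respect to the uniform probability measure $P_o(\sigma)=2^{-N}$ on $\Sigma_N=\{-1,+1\}^N$. For each fixed realization of the matrix $(g_{ij})$, let $\mathsf{X}=(\mathsf{X}_i)_{i=1}^N$ be a centered Gaussian random vector (independent of everything else, with expectation denoted $\mathsf{E}$) with covariance \[ \mathsf{E}\,\mathsf{X}_i\mathsf{X}_j = \begin{cases} \sum_{k=1}^N |g_{ik}|, & i=j,\\ g_{ij}, & i\neq j.\end{cases} \] Then \[ N f_N(\beta,h) = \log \mathsf{E}\exp\left(\sum_{i=1}^N \log\cosh\left(h+\sqrt{\beta}\,\mathsf{X}_i\right)\right) - \frac{\beta}{2}\sum_{i,j=1}^N |g_{ij}|. \]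
   Context: This is the Sherrington–Kirkpatrick spin glass model. The disorder $(g_{ij})$ is quenched: the identity is asserted for each fixed realization of the matrix $(g_{ij})$, with $\mathsf{E}$ the expectation only over the auxiliary Gaussian field $\mathsf{X}$ (whose covariance depends on the realization of $(g_{ij})$). *)

From HB Require Import structures.
From mathcomp Require Import all_boot all_order all_algebra.
From mathcomp Require Import all_classical all_reals all_analysis.
Set Implicit Arguments. Unset Strict Implicit. Unset Printing Implicit Defensive.
Import Order.TTheory GRing.Theory Num.Theory.
Local Open Scope classical_set_scope.
Local Open Scope ring_scope.

Definition spin {R : realType} (b : bool) : R := if b then 1 else -1.

Definition SK_H {R : realType} (N : nat) (g : 'M[R]_N) (s : {ffun 'I_N -> bool}) : R :=
  \sum_(i < N) \sum_(j < N | (i < j)%N) g i j * spin (s i) * spin (s j).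

Definition NfN {R : realType} (N : nat) (g : 'M[R]_N) (beta h : R) : R :=
  ln (\sum_(s : {ffun 'I_N -> bool})
        (2 ^+ N)^-1 * expR (beta * SK_H g s + h * \sum_(i < N) spin (s i))).

Definition logcosh {R : realType} (x : R) : R := ln ((expR x + expR (- x)) / 2).

Definition SK_cov {R : realType} (N : nat) (g : 'M[R]_N) : 'M[R]_N :=
  \matrix_(i < N, j < N) (if i == j then \sum_(k < N) `|g i k| else g i j).

(* X : Omega -> R^N is a centered Gaussian vector with covariance C:
   each coordinate is measurable and every linear combination <u,X> is
   centered normal with variance u^T C u (the Dirac mass at 0 when the
   variance vanishes). [normal_prob m s] has standard deviation s. *)
Definition centered_gaussian_vector {R : realType} (d : measure_display)
  (Omega : measurableType d) (P : probability Omega R) (N : nat)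
  (C : 'M[R]_N) (X : Omega -> 'I_N -> R) : Prop :=
  (forall i, measurable_fun setT (fun w => X w i)) /\
  forall u : 'I_N -> R,
    let v := \sum_(i < N) \sum_(j < N) u i * C i j * u j in
    forall A : set R, measurable A ->
      P ((fun w => \sum_(i < N) u i * X w i) @^-1` A) =
      (if v == 0 then \d_(0 : R) A else normal_prob 0 (Num.sqrt v) A).

From HB Require Import structures.
From mathcomp Require Import all_boot all_order all_algebra.
From mathcomp Require Import all_classical all_reals all_analysis.
From mathcomp Require Import ring lra.
From mathcomp Require Import measurable_realfun.
Import Order.TTheory GRing.Theory Num.Theory.
Local Open Scope classical_set_scope.
Local Open Scope ring_scope.

(* Expanding cosh x = (e^x + e^-x)/2 in each factor turns exp(sum_i logcosh(h + sqrt(beta) X_i))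
   into the average over spin configurations sigma of exp(sum_i sigma_i (h + sqrt(beta) X_i)).
   For fixed sigma, <sqrt(beta) sigma, X> is centered Gaussian with variance
   beta sigma^T C sigma = beta (sum_ij |g_ij| + 2 H_N(sigma)), because sigma_i^2 = 1 turns the
   diagonal of C into sum_ij |g_ij| and its off-diagonal part into 2 H_N(sigma). Integrating
   term by term with E exp(Y) = exp(Var Y / 2) yields exp(beta/2 sum_ij |g_ij|) times
   E_o exp(beta H_N + h sum_i sigma_i). *)

Definition quad_form {R : pzRingType} {N : nat} (C : 'M[R]_N) (u : 'I_N -> R) : R :=
  \sum_(i < N) \sum_(j < N) u i * C i j * u j.

Lemma sum_sym_zero_diag {V : nmodType} (N : nat) (F : 'I_N -> 'I_N -> V) :
  (forall i j, F j i = F i j) -> (forall i, F i i = 0) ->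
  \sum_(i < N) \sum_(j < N) F i j = (\sum_(i < N) \sum_(j < N | (i < j)%N) F i j) *+ 2.
Proof.
move=> F_sym F_diag.
pose G (i j : 'I_N) := if (i < j)%N then F i j else 0.
have FG i j : F i j = G i j + G j i.
  rewrite /G; have [_|_|/val_inj ->] := ltngtP i j.
  - by rewrite addr0.
  - by rewrite add0r F_sym.
  - by rewrite F_diag addr0.
transitivity (\sum_(i < N) \sum_(j < N) G i j + \sum_(i < N) \sum_(j < N) G j i).
  rewrite -big_split; apply: eq_bigr => i _; rewrite -big_split.
  by apply: eq_bigr => j _; exact: FG.
rewrite [X in _ + X]exchange_big /= -mulr2n; congr (_ *+ 2).
by apply: eq_bigr => i _; rewrite [RHS]big_mkcond.
Qed.

Lemma spin_sqr {R : realType} (b : bool) : spin b ^+ 2 = 1 :> R.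
Proof. by case: b; rewrite /spin ?sqrrN expr1n. Qed.

Lemma expR_sum_logcosh {R : realType} (N : nat) (x : 'I_N -> R) :
  expR (\sum_(i < N) logcosh (x i)) =
  \sum_(s : {ffun 'I_N -> bool}) (2 ^+ N)^-1 * expR (\sum_(i < N) spin (s i) * x i).
Proof.
rewrite expR_sum.
transitivity (\prod_(i < N) \sum_(b : bool) expR (spin b * x i) / 2).
  apply: eq_bigr => i _; rewrite /logcosh lnK; last first.
    by rewrite posrE divr_gt0 ?addr_gt0 ?expR_gt0.
  by rewrite big_bool /spin /= mul1r mulN1r mulrDl addrC.
rewrite bigA_distr_bigA /=; apply: eq_bigr => s _.
by rewrite big_split /= -expR_sum prodr_const card_ord mulrC exprVn.
Qed.

Lemma expR_NfN {R : realType} (N : nat) (g : 'M[R]_N) (beta h : R) :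
  expR (NfN g beta h) = \sum_(s : {ffun 'I_N -> bool})
    (2 ^+ N)^-1 * expR (beta * SK_H g s + h * \sum_(i < N) spin (s i)).
Proof.
have term_gt0 (s : {ffun 'I_N -> bool}) :
    0 < (2 ^+ N)^-1 * expR (beta * SK_H g s + h * \sum_(i < N) spin (s i)) :> R.
  by rewrite mulr_gt0 ?expR_gt0 // invr_gt0 exprn_gt0.
rewrite /NfN lnK // posrE (bigD1 [ffun=> true]) //=.
by apply: ltr_pwDl => //; apply: sumr_ge0 => s _; exact/ltW.
Qed.

Section SK_covariance.
Variables (R : realType) (N : nat) (g : 'M[R]_N).
Hypothesis g_sym : forall i j, g j i = g i j.
Hypothesis g_diag : forall i, g i i = 0.

Lemma SK_H_double (s : {ffun 'I_N -> bool}) :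
  2 * SK_H g s = \sum_(i < N) \sum_(j < N) g i j * spin (s i) * spin (s j).
Proof.
rewrite sum_sym_zero_diag ?mulr_natl // => [i j|i].
  by rewrite g_sym mulrAC.
by rewrite g_diag !mul0r.
Qed.

Lemma quad_form_SK_cov (u : 'I_N -> R) :
  quad_form (SK_cov g) u =
  \sum_(i < N) \sum_(j < N) (`|g i j| * u i ^+ 2 + g i j * u i * u j).
Proof.
apply: eq_bigr => i _.
rewrite big_split /= -mulr_suml [LHS](bigD1 i) //= [X in _ = _ + X](bigD1 i) //=.
rewrite g_diag !mul0r add0r; congr (_ + _).
  by rewrite mxE eqxx; ring.
by apply: eq_bigr => j ji; rewrite mxE eq_sym (negbTE ji); ring.
Qed.

Lemma quad_form_SK_cov_ge0 (u : 'I_N -> R) : 0 <= quad_form (SK_cov g) u.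
Proof.
pose a i j := `|g i j| * u i ^+ 2 + g i j * u i * u j.
have pair_ge0 i j : 0 <= a i j + a j i.
  (* |g| (x^2 + y^2) + 2 g x y = ((|g| + g) (x + y)^2 + (|g| - g) (x - y)^2) / 2 *)
  have /andP[lo hi] : - `|g i j| <= g i j <= `|g i j| by rewrite -ler_norml.
  have : 0 <= (`|g i j| + g i j) * (u i + u j) ^+ 2.
    by rewrite mulr_ge0 ?sqr_ge0 // addrC -lerBlDr sub0r.
  have : 0 <= (`|g i j| - g i j) * (u i - u j) ^+ 2.
    by rewrite mulr_ge0 ?sqr_ge0 // subr_ge0.
  rewrite /a (g_sym i j); lra.
rewrite quad_form_SK_cov -(pmulrn_lge0 _ (isT : (0 < 2)%N)) mulr2n.
rewrite [X in _ + X]exchange_big -big_split /=; apply: sumr_ge0 => i _.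
by rewrite -big_split /=; apply: sumr_ge0 => j _; exact: pair_ge0.
Qed.

Lemma quad_form_SK_cov_spin (a : R) (s : {ffun 'I_N -> bool}) :
  quad_form (SK_cov g) (fun i => a * spin (s i)) =
  a ^+ 2 * (\sum_(i < N) \sum_(j < N) `|g i j| + 2 * SK_H g s).
Proof.
rewrite quad_form_SK_cov SK_H_double mulrDr !mulr_sumr -big_split /=.
apply: eq_bigr => i _; rewrite !mulr_sumr -big_split /=.
by apply: eq_bigr => j _; rewrite exprMn spin_sqr; ring.
Qed.
End SK_covariance.

Section normal_mgf.
Context {R : realType}.
Local Notation mu := (@lebesgue_measure R).

Lemma integral_expR_normal_pdf (s : R) : s != 0 ->
  (\int[mu]_y ((expR y)%:E * (normal_pdf 0 s y)%:E) = (expR (s ^+ 2 / 2))%:E)%E.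
Proof.
move=> s0.
(* Completing the square: e^y times the N(0, s^2) density is e^(s^2/2) times the N(s^2, s^2) one. *)
transitivity (\int[mu]_y ((expR (s ^+ 2 / 2))%:E * (normal_pdf (s ^+ 2) s y)%:E))%E.
  apply: eq_integral => y _; rewrite -!EFinM; congr EFin.
  rewrite /normal_pdf (negbTE s0) mulrCA [RHS]mulrCA; congr (_ * _).
  by rewrite /normal_fun -!expRD; congr expR; field.
rewrite -[RHS]mule1 -(integral_normal_pdf (s ^+ 2) s).
apply: ge0_integralZl => //.
- by apply/measurable_EFinP; exact: measurable_normal_pdf.
- by move=> y _; rewrite lee_fin normal_pdf_ge0.
Qed.

Lemma integral_expR_normal_prob (s : R) : s != 0 ->
  (\int[normal_prob 0 s]_y (expR y)%:E = (expR (s ^+ 2 / 2))%:E)%E.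
Proof.
move=> s0.
have mexpR : measurable_fun setT (fun y : R => (expR y)%:E).
  by apply/measurable_EFinP; exact: measurable_expR.
have dom := @normal_prob_dominates R 0 s.
rewrite -(Radon_Nikodym_SigmaFinite.change_of_variables dom) //.
rewrite -(integral_expR_normal_pdf _ s0).
apply: ae_eq_integral => //.
- apply: emeasurable_funM => //; apply: measurable_int.
  exact: Radon_Nikodym_SigmaFinite.f_integrable.
- by apply: emeasurable_funM => //; apply/measurable_EFinP; exact: measurable_normal_pdf.
apply: ae_eqe_mul2l; apply: integral_ae_eq => //.
- exact: Radon_Nikodym_SigmaFinite.f_integrable.
- by apply/measurable_EFinP; exact: measurable_normal_pdf.
by move=> E _ mE; rewrite -Radon_Nikodym_SigmaFinite.f_integral.
Qed.
End normal_mgf.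

Section centered_gaussian_vector.
Context {R : realType} {d : measure_display} {Omega : measurableType d}.
Context {P : probability Omega R} {N : nat} {C : 'M[R]_N} {X : Omega -> 'I_N -> R}.
Hypothesis X_gauss : centered_gaussian_vector P C X.

Lemma measurable_linear_form (u : 'I_N -> R) :
  measurable_fun setT (fun w => \sum_(i < N) u i * X w i).
Proof. by apply: measurable_sum => i; apply: measurable_funM => //; exact: X_gauss.1. Qed.

Lemma centered_gaussian_vector_mgf (u : 'I_N -> R) : 0 <= quad_form C u ->
  (\int[P]_w (expR (\sum_(i < N) u i * X w i))%:E = (expR (quad_form C u / 2))%:E)%E.
Proof.
move=> v_ge0.
pose Y : Omega -> measurableTypeR R := fun w => \sum_(i < N) u i * X w i.
have lawY A : measurable A -> P (Y @^-1` A) = if quad_form C u == 0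
    then \d_(0 : R) A else normal_prob 0 (Num.sqrt (quad_form C u)) A.
  exact: X_gauss.2.
have mY : measurable_fun setT Y by exact: measurable_linear_form.
have mexpR : measurable_fun setT (fun y : measurableTypeR R => (expR y)%:E).
  by apply/measurable_EFinP; exact: measurable_expR.
have -> : (\int[P]_w (expR (\sum_(i < N) u i * X w i))%:E =
           \int[pushforward P Y]_y (expR y)%:E)%E.
  by rewrite (ge0_integral_pushforward mY).
have [v0|v_neq0] := eqVneq (quad_form C u) 0.
  rewrite v0 eqxx in lawY.
  rewrite (@eq_measure_integral _ _ _ setT (\d_(0 : measurableTypeR R))); last first.
    by move=> A mA _; exact: lawY.
  by rewrite integral_dirac // diracT mul1e v0 mul0r expR0.
rewrite (negbTE v_neq0) in lawY.
rewrite (@eq_measure_integral _ _ _ setT (normal_prob 0 (Num.sqrt (quad_form C u)))); last first.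
  by move=> A mA _; exact: lawY.
rewrite integral_expR_normal_prob ?sqr_sqrtr //.
by rewrite sqrtr_eq0 -ltNge lt_neqAle eq_sym v_neq0.
Qed.

Lemma centered_gaussian_vector_mgf_sum (I : finType) (c : I -> R) (u : I -> 'I_N -> R) :
  (forall k, 0 <= c k) -> (forall k, 0 <= quad_form C (u k)) ->
  (\int[P]_w (\sum_(k : I) c k * expR (\sum_(i < N) u k i * X w i))%:E =
   (\sum_(k : I) c k * expR (quad_form C (u k) / 2))%:E)%E.
Proof.
move=> c_ge0 u_ge0.
have mexp k : measurable_fun setT (fun w => expR (\sum_(i < N) u k i * X w i)).
  by apply: measurableT_comp; [exact: measurable_expR | exact: measurable_linear_form].
under eq_integral do rewrite -sumEFin.
rewrite ge0_integral_sum //; last 2 first.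
- by move=> k; apply/measurable_EFinP; apply: measurable_funM.
- by move=> k w _; rewrite lee_fin mulr_ge0 ?expR_ge0.
rewrite -sumEFin; apply: eq_bigr => k _.
under eq_integral do rewrite EFinM.
rewrite ge0_integralZl ?lee_fin //.
- by rewrite centered_gaussian_vector_mgf.
- by apply/measurable_EFinP; exact: mexp.
Qed.
End centered_gaussian_vector.

Theorem mainTheorem1 (R : realType) (N : nat) (beta h : R) (g : 'M[R]_N)
  (d : measure_display) (Omega : measurableType d) (P : probability Omega R)
  (X : Omega -> 'I_N -> R) :
  0 < beta ->
  g^T = g ->
  (forall i : 'I_N, g i i = 0) ->
  centered_gaussian_vector P (SK_cov g) X ->
  (\int[P]_w (expR (\sum_(i < N) logcosh (h + Num.sqrt beta * X w i)))%:E)%E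
  = (expR (NfN g beta h + beta / 2 * \sum_(i < N) \sum_(j < N) `|g i j|))%:E.
Proof.
move=> beta_gt0 gT g_diag X_gauss.
have g_sym i j : g j i = g i j by rewrite -[in RHS]gT mxE.
pose c (s : {ffun 'I_N -> bool}) := (2 ^+ N)^-1 * expR (h * \sum_(i < N) spin (s i)).
pose u (s : {ffun 'I_N -> bool}) i := Num.sqrt beta * spin (s i).
have quad_u s : quad_form (SK_cov g) (u s) =
    beta * (\sum_(i < N) \sum_(j < N) `|g i j| + 2 * SK_H g s).
  by rewrite quad_form_SK_cov_spin // sqr_sqrtr // ltW.
transitivity (\int[P]_w (\sum_s c s * expR (\sum_(i < N) u s i * X w i))%:E)%E.
  apply: eq_integral => w _; congr EFin; rewrite expR_sum_logcosh.
  apply: eq_bigr => s _; rewrite /c -mulrA -expRD mulr_sumr -big_split /=.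
  by congr (_ * expR _); apply: eq_bigr => i _; rewrite /u; ring.
rewrite (centered_gaussian_vector_mgf_sum X_gauss); last 2 first.
- by move=> s; rewrite mulr_ge0 ?expR_ge0 // invr_ge0 exprn_ge0.
- by move=> s; exact: quad_form_SK_cov_ge0.
congr EFin; rewrite expRD expR_NfN mulr_suml; apply: eq_bigr => s _.
by rewrite /c quad_u -!mulrA -!expRD; congr (_ * expR _); field.
Qed.
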